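(* Let $n\ge 1$, let $\mathcal{A},\mathcal{I}\subseteq\{1,\dots,n\}$, and let $H:\mathbb{R}^n_+\to[0,1]$ be given by $$H(\mathbf{y})=\frac{A(\mathbf{y})}{A(\mathbf{y})+B(\mathbf{y})},\qquad A(\mathbf{y})=\Big(\sum_{i\in\mathcal{A}} w_i y_i^{n_i}\Big)^m,\qquad B(\mathbf{y})=K^m\Big(1+\sum_{j\in\mathcal{I}}\Big(\frac{y_j}{K_j}\Big)^{n_j}\Big)^m,$$ where $w_i>0$, $K>0$, $K_j>0$ are constants. Assume that all Hill coefficients satisfy $n_i\ge 1$ and that $m\ge 1$. Then the first derivatives of $H$ are uniformly bounded on $\mathbb{R}^n_+$: there exists $C>0$ such that $$\Big|\frac{\partial H}{\partial y_k}(\mathbf{y})\Big|\le C\qquad\text{for all }k\in\{1,\dots,n\}\text{ and all }\mathbf{y}\in\mathbb{R}^n_+.$$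
   Context: $\mathbb{R}^n_+=[0,\infty)^n$. $\mathcal{A}$ is the set of activator indices and $\mathcal{I}$ the set of inhibitor indices; $n_i$ ($i\in\mathcal{A}\cup\mathcal{I}$) are the Hill coefficients, $m$ is an overall cooperativity coefficient, $w_i$ are weights, $K$ is the half-maximal activation constant and $K_j$ are inhibition constants. Derivatives at boundary points of $\mathbb{R}^n_+$ are understood as one-sided derivatives. *)

From HB Require Import structures.
From mathcomp Require Import all_boot all_order all_algebra.
From mathcomp Require Import all_classical all_reals all_analysis.
Set Implicit Arguments. Unset Strict Implicit. Unset Printing Implicit Defensive.
Import Order.TTheory GRing.Theory Num.Theory.
Import numFieldNormedType.Exports.
Local Open Scope classical_set_scope.
Local Open Scope ring_scope.

Section Hill.
Variables (R : realType) (n : nat).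

Definition hillA (Aset : {set 'I_n}) (w hc : 'I_n -> R) (m : R)
  (y : 'I_n -> R) : R :=
  (\sum_(i in Aset) w i * (y i `^ hc i)) `^ m.

Definition hillB (Iset : {set 'I_n}) (Kc hc : 'I_n -> R) (m K : R)
  (y : 'I_n -> R) : R :=
  K `^ m * (1 + \sum_(j in Iset) ((y j / Kc j) `^ hc j)) `^ m.

Definition hillH (Aset Iset : {set 'I_n}) (w hc Kc : 'I_n -> R) (m K : R)
  (y : 'I_n -> R) : R :=
  hillA Aset w hc m y / (hillA Aset w hc m y + hillB Iset Kc hc m K y).

(* d is the partial derivative of f w.r.t. y_k at y, taken within R^n_+:
   the difference quotient converges to d as t -> 0 with t <> 0 and
   y_k + t >= 0 (two-sided if y_k > 0, right-sided if y_k = 0). *)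
Definition partial_deriv_nonneg (f : ('I_n -> R) -> R) (y : 'I_n -> R)
  (k : 'I_n) (d : R) : Prop :=
  (fun t : R => (f (fun i => y i + (if i == k then t else 0)) - f y) / t)
    @ within [set t : R | t != 0 /\ 0 <= y k + t] (nbhs (0 : R)) --> d.

End Hill.

From HB Require Import structures.
From mathcomp Require Import all_boot all_order all_algebra.
From mathcomp Require Import all_classical all_reals all_analysis.
From mathcomp Require Import ring lra.
Import Order.TTheory GRing.Theory Num.Theory.
Import numFieldNormedType.Exports.
Local Open Scope classical_set_scope.
Local Open Scope ring_scope.

(* Along the line [t |-> y + t e_k], H is [A / (A + B)] with [A = S ^ m],
   [B = K ^ m * T ^ m], where [S] and [T] are the activator and inhibitor sums.
   Replacing every power [x `^ r] by [powRext r] extends S, T, A, B to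
   functions of t that are differentiable at t = 0 even when [y k = 0], so the
   one-sided partial derivative is an ordinary derivative.  Since dA, dB >= 0,
   |(A/(A+B))'| <= dA/(A+B) + dB/B.  The bound [x `^ (r - 1) <= x `^ r + 1]
   gives dA <= m n_k (1 + w_k) (S^m + 1), hence
   dA/(A+B) <= dA/(S^m + K^m) <= m n_k (1 + w_k) (1 + K^-m); it also gives
   (y_k/K_k)^(n_k - 1) <= T, hence dB/B = m T'/T <= m n_k / K_k. *)

Set Implicit Arguments.
Unset Strict Implicit.
Unset Printing Implicit Defensive.

Section PowRExtension.
Variable R : realType.
Implicit Types r x : R.

(* Agrees with [x `^ r] on [0, +oo) and is differentiable at every [x >= 0]
   when [1 <= r]: [|x| `^ r] is flat at 0 for [r > 1], but for [r = 1] the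
   identity must replace [|x|]. *)
Definition powRext r x := if r == 1 then x else `|x| `^ r.

Lemma powRext_ge0 r x : 0 <= x -> powRext r x = x `^ r.
Proof.
move=> x_ge0; rewrite /powRext; case: eqP => [->|_]; first by rewrite powRr1.
by rewrite ger0_norm.
Qed.

Lemma is_derive0_powRext r : 1 < r -> is_derive (0 : R) 1 (powRext r) 0.
Proof.
move=> r_gt1; have r_neq1 : r != 1 by rewrite gt_eqF.
have r1_gt0 : 0 < r - 1 by rewrite subr_gt0.
suff quot0 : (fun h => h^-1 *: ((powRext r \o shift 0) (h *: 1) - powRext r 0))
    @ 0^' --> 0.
  by split; [apply/cvg_ex; exists 0 | exact: cvg_lim quot0].
apply/(cvgr0Pnorm_lt (F := 0^')) => e e_gt0; near=> t.
have t_neq0 : t != 0 by near: t; exact: nbhs_dnbhs_neq.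
have t_small : `|t| < e `^ (r - 1)^-1 by near: t; apply: dnbhs0_lt; exact: powR_gt0.
have normt_gt0 : 0 < `|t| by rewrite normr_gt0.
rewrite /= /powRext (negbTE r_neq1) normr0 powR0 ?gt_eqF ?(lt_trans ltr01) //.
rewrite subr0 addr0 -[t%:A]/(t * 1) mulr1 -[t^-1 *: _]/(t^-1 * _).
rewrite normrM normrV ?unitfE // (ger0_norm (powR_ge0 _ _)).
rewrite -(mulr_powRB1 (normr_ge0 t) (lt_trans ltr01 r_gt1)) mulKf ?gt_eqF //.
have := @gt0_ltr_powR _ (r - 1) r1_gt0 `|t| (e `^ (r - 1)^-1).
rewrite -powRrM mulVf ?gt_eqF // powRr1 ?ltW //.
by apply; rewrite ?nnegrE ?normr_ge0 ?powR_ge0.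
Unshelve. all: by end_near. Qed.

Lemma is_derive_powRext r x : 1 <= r -> 0 <= x ->
  is_derive x 1 (powRext r) (r * x `^ (r - 1)).
Proof.
move=> r_ge1 x_ge0; have [/eqP r_eq1|r_neq1] := boolP (r == 1).
  have -> : powRext r = id by apply/funext => t; rewrite /powRext r_eq1 eqxx.
  by rewrite r_eq1 subrr powRr0 mulr1; exact: is_derive_id.
have r_gt1 : 1 < r by rewrite lt_neqAle eq_sym r_neq1.
have [x_gt0|] := ltP 0 x.
  apply: near_eq_is_derive (is_derive1_powR r x_gt0).
  near=> z; rewrite /powRext (negbTE r_neq1) ger0_norm // ltW //.
  by near: z; exact: lt_nbhsr.
move=> x_le0; have -> : x = 0 by apply/eqP; rewrite eq_le x_ge0 x_le0.
rewrite powR0 ?subr_eq0 // mulr0; exact: is_derive0_powRext.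
Unshelve. all: by end_near. Qed.

Lemma is_derive_powRext_comp r (f : R -> R) x df : 1 <= r -> 0 <= f x ->
  is_derive x 1 f df ->
  is_derive x 1 (powRext r \o f) (r * f x `^ (r - 1) * df).
Proof. by move=> r_ge1 fx_ge0; apply: is_derive1_comp; exact: is_derive_powRext. Qed.

End PowRExtension.

Section RealDerive.
Variable R : realType.
Implicit Types f g : R -> R.

Lemma is_derive_div f g (x df dg : R) :
  is_derive x 1 f df -> is_derive x 1 g dg -> g x != 0 ->
  is_derive x 1 (fun t => f t / g t) ((df * g x - f x * dg) / g x ^+ 2).
Proof.
move=> f_df g_dg gx_neq0.
apply: is_derive_eq (is_deriveM f_df (is_deriveV gx_neq0 g_dg)) _.
by rewrite /GRing.scale /=; field.
Qed.

Lemma is_derive_bigsum (I : finType) (P : pred I) (h : I -> R -> R) (x : R)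
    (dh : I -> R) : (forall i, P i -> is_derive x 1 (h i) (dh i)) ->
  is_derive x 1 (fun t => \sum_(i | P i) h i t) (\sum_(i | P i) dh i).
Proof.
move=> h_dh; rewrite -fct_sumE.
elim/big_rec2: _ => [|i f d Pi f_d]; first exact: is_derive_cst.
by apply: is_deriveD => //; exact: h_dh.
Qed.

Lemma is_derive_partial_deriv_nonneg n (f : ('I_n -> R) -> R) (y : 'I_n -> R)
    (k : 'I_n) (G : R -> R) d :
  0 <= y k -> is_derive (0 : R) 1 G d ->
  (forall t, 0 <= y k + t -> f (fun i => y i + (if i == k then t else 0)) = G t) ->
  partial_deriv_nonneg f y k d.
Proof.
move=> yk_ge0 [G_derivable <-] fG.
have fy : f y = G 0.
  rewrite -fG ?addr0 //; congr f; apply/funext => i; by case: ifP; rewrite addr0.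
set D := [set t : R | t != 0 /\ 0 <= y k + t].
have G_cvg : (fun h => h^-1 *: ((G \o shift 0) (h *: 1) - G 0)) @ within D (nbhs 0)
    --> 'D_1 G 0.
  by apply: cvg_trans G_derivable; apply: cvg_app; apply: within_subset => t [].
apply: cvg_trans G_cvg; apply: near_eq_cvg.
rewrite near_withinE; near=> t => -[t_neq0 t_dom].
rewrite /= fG // fy addr0 -[t *: 1]/(t * 1) mulr1 -[t^-1 *: _]/(t^-1 * _).
exact: mulrC.
Unshelve. all: by end_near. Qed.

End RealDerive.

Section Inequalities.
Variable R : realType.

Lemma powRB1_le x r : 0 <= x -> 1 <= r -> x `^ (r - 1) <= x `^ r + 1 :> R.
Proof.
move=> x_ge0 r_ge1; have [x_le1|x_gt1] := leP x 1.
  apply: (@le_trans _ _ (1 `^ (r - 1))); last by rewrite powR1 lerDr powR_ge0.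
  by apply: ge0_ler_powR; rewrite ?nnegrE ?subr_ge0 ?ler01.
apply: (@le_trans _ _ (x `^ r)); last by rewrite lerDl ler01.
by apply: ler_powR; [exact: ltW | rewrite lerBlDr lerDl ler01].
Qed.

Lemma powR_ge1 x r : 1 <= x -> 0 <= r -> 1 <= x `^ r :> R.
Proof.
move=> x_ge1 r_ge0; apply: (@le_trans _ _ (1 `^ r)); first by rewrite powR1.
by apply: ge0_ler_powR; rewrite ?nnegrE ?ler01 ?(le_trans ler01 x_ge1).
Qed.

Lemma norm_derive_ratio_le (A B dA dB : R) :
  0 <= A -> 0 < B -> 0 <= dA -> 0 <= dB ->
  `|(dA * (A + B) - A * (dA + dB)) / (A + B) ^+ 2| <= dA / (A + B) + dB / B.
Proof.
move=> A_ge0 B_gt0 dA_ge0 dB_ge0.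
have AB_gt0 : 0 < A + B by apply: ltr_wpDl.
have AB2_gt0 : 0 < (A + B) ^+ 2 by apply: exprn_gt0.
rewrite normrM normfV (ger0_norm (ltW AB2_gt0)) ler_pdivrMr //.
have -> : (dA / (A + B) + dB / B) * (A + B) ^+ 2
    = dA * (A + B) + dB * ((A + B) ^+ 2 / B) by field; rewrite ?gt_eqF.
have : A <= (A + B) ^+ 2 / B by rewrite ler_pdivlMr //; nra.
by rewrite ler_norml; move=> ?; apply/andP; split; nra.
Qed.

Lemma addr1_div_le (X a : R) : 0 <= X -> 0 < a -> (X + 1) / (X + a) <= 1 + a^-1.
Proof.
move=> X_ge0 a_gt0; rewrite ler_pdivrMr ?ltr_wpDl //.
have -> : (1 + a^-1) * (X + a) = X + 1 + (a + X / a) by field; rewrite gt_eqF.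
by rewrite lerDl addr_ge0 ?divr_ge0 // ltW.
Qed.

End Inequalities.

Lemma sum_mul_delta (R : pzSemiRingType) (I : finType) (P : {pred I})
    (F : I -> R) (k : I) :
  \sum_(i in P) F i * (i == k)%:R = if k \in P then F k else 0.
Proof.
case: ifP => kP.
  rewrite (bigD1 k) //= eqxx mulr1 big1 ?addr0 // => i /andP[_ /negbTE ->].
  exact: mulr0.
by rewrite big1 // => i iP; case: eqP => [ik|_]; [rewrite ik kP in iP | exact: mulr0].
Qed.

Section HillPartialDerivative.
Variables (R : realType) (n : nat) (Aset Iset : {set 'I_n}).
Variables (w hc Kc : 'I_n -> R) (m K : R).
Hypothesis w_gt0 : forall i, i \in Aset -> 0 < w i.
Hypothesis K_gt0 : 0 < K.
Hypothesis Kc_gt0 : forall j, j \in Iset -> 0 < Kc j.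
Hypothesis hcA_ge1 : forall i, i \in Aset -> 1 <= hc i.
Hypothesis hcI_ge1 : forall j, j \in Iset -> 1 <= hc j.
Hypothesis m_ge1 : 1 <= m.

Definition hill_deriv_bound (k : 'I_n) : R :=
  (if k \in Aset then m * hc k * (1 + w k) * (1 + (K `^ m)^-1) else 0)
  + (if k \in Iset then m * hc k / Kc k else 0).

Let m_gt0 : 0 < m. Proof. exact: lt_le_trans m_ge1. Qed.
Let Km_gt0 : 0 < K `^ m. Proof. exact: powR_gt0. Qed.

Lemma hill_deriv_bound_ge0 k : 0 <= hill_deriv_bound k.
Proof.
apply: addr_ge0; case: ifP => // kP.
  have hk_ge0 := le_trans ler01 (hcA_ge1 kP).
  rewrite !mulr_ge0 ?addr_ge0 ?invr_ge0 ?powR_ge0 ?(ltW m_gt0) ?(ltW (w_gt0 kP)) //.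
have hk_ge0 := le_trans ler01 (hcI_ge1 kP).
by rewrite divr_ge0 ?mulr_ge0 ?(ltW m_gt0) ?(ltW (Kc_gt0 kP)).
Qed.

Variables (y : 'I_n -> R) (k : 'I_n).
Hypothesis y_ge0 : forall i, 0 <= y i.

Let yt (t : R) i := y i + (if i == k then t else 0).
Let S := \sum_(i in Aset) w i * y i `^ hc i.
Let T := 1 + \sum_(j in Iset) (y j / Kc j) `^ hc j.
Let dS := if k \in Aset then w k * (hc k * y k `^ (hc k - 1)) else 0.
Let dT := if k \in Iset then hc k * (y k / Kc k) `^ (hc k - 1) / Kc k else 0.
Let Sext (t : R) := \sum_(i in Aset) w i * powRext (hc i) (yt t i).
Let Text (t : R) := 1 + \sum_(j in Iset) powRext (hc j) (yt t j / Kc j).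

Let yt0 i : yt 0 i = y i.
Proof. by rewrite /yt; case: ifP; rewrite addr0. Qed.

Let yt_ge0 t : 0 <= y k + t -> forall i, 0 <= yt t i.
Proof. by move=> ykt_ge0 i; rewrite /yt; case: eqP => [->|_]; rewrite ?addr0. Qed.

Let is_derive_yt i : is_derive (0 : R) 1 (yt ^~ i) (i == k)%:R.
Proof.
rewrite /yt; case: eqP => _.
  have -> : (fun t => y i + t) = cst (y i) + id by [].
  by have := is_deriveD (is_derive_cst (y i) (0 : R) 1) (is_derive_id (0 : R) 1); rewrite add0r.
by have -> : (fun t => y i + 0) = cst (y i + 0) by []; exact: is_derive_cst.
Qed.

Lemma hillH_line t : 0 <= y k + t ->
  hillH Aset Iset w hc Kc m K (yt t)
  = powRext m (Sext t) / (powRext m (Sext t) + K `^ m * powRext m (Text t)).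
Proof.
move=> ykt_ge0; have yt_t_ge0 := yt_ge0 ykt_ge0.
have ytK_ge0 j : j \in Iset -> 0 <= yt t j / Kc j.
  by move=> jI; rewrite divr_ge0 ?yt_t_ge0 ?(ltW (Kc_gt0 jI)).
have Sext_eq : Sext t = \sum_(i in Aset) w i * yt t i `^ hc i.
  by apply: eq_bigr => i _; rewrite powRext_ge0.
have Text_eq : Text t = 1 + \sum_(j in Iset) (yt t j / Kc j) `^ hc j.
  by congr (_ + _); apply: eq_bigr => j jI; rewrite powRext_ge0 ?ytK_ge0.
rewrite /hillH /hillA /hillB Sext_eq Text_eq !powRext_ge0 //.
  by rewrite addr_ge0 ?sumr_ge0 // => j _; rewrite powR_ge0.
by rewrite sumr_ge0 // => i iA; rewrite mulr_ge0 ?powR_ge0 ?(ltW (w_gt0 iA)).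
Qed.

Lemma Sext0 : Sext 0 = S.
Proof. by apply: eq_bigr => i _; rewrite yt0 powRext_ge0. Qed.

Lemma Text0 : Text 0 = T.
Proof.
congr (_ + _); apply: eq_bigr => j jI.
by rewrite yt0 powRext_ge0 // divr_ge0 ?(ltW (Kc_gt0 jI)).
Qed.

Lemma is_derive_Sext : is_derive (0 : R) 1 Sext dS.
Proof.
have -> : dS = \sum_(i in Aset) w i * (hc i * y i `^ (hc i - 1) * (i == k)%:R).
  by under eq_bigr do rewrite mulrA; rewrite sum_mul_delta.
apply: is_derive_bigsum => i iA; apply: is_deriveZ.
rewrite -yt0; apply: is_derive_powRext_comp (hcA_ge1 iA) _ (is_derive_yt i).
by rewrite yt_ge0 ?addr0.
Qed.

Lemma is_derive_Text : is_derive (0 : R) 1 Text dT.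
Proof.
have -> : dT = 0 + \sum_(j in Iset)
    hc j * (y j / Kc j) `^ (hc j - 1) * ((j == k)%:R / Kc j).
  by under eq_bigr do rewrite mulrA mulrAC; rewrite sum_mul_delta add0r.
apply: is_deriveD.
apply: is_derive_bigsum => j jI.
rewrite -yt0; apply: is_derive_powRext_comp (hcI_ge1 jI) _ _.
  by rewrite divr_ge0 ?yt_ge0 ?addr0 ?(ltW (Kc_gt0 jI)).
have -> : (fun t => yt t j / Kc j) = (Kc j)^-1 \*: yt ^~ j.
  by apply/funext => t; rewrite /= mulrC.
by rewrite mulrC; apply: is_deriveZ.
Qed.

Let S_ge0 : 0 <= S.
Proof. by apply: sumr_ge0 => i iA; rewrite mulr_ge0 ?powR_ge0 ?(ltW (w_gt0 iA)). Qed.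

Let T_ge1 : 1 <= T.
Proof. by rewrite /T lerDl sumr_ge0 // => j _; rewrite powR_ge0. Qed.

Let T_gt0 : 0 < T. Proof. exact: lt_le_trans ltr01 T_ge1. Qed.

Let dS_ge0 : 0 <= dS.
Proof.
rewrite /dS; case: ifP => // kA.
by rewrite !mulr_ge0 ?powR_ge0 ?(ltW (w_gt0 kA)) ?(le_trans ler01 (hcA_ge1 kA)).
Qed.

Let dT_ge0 : 0 <= dT.
Proof.
rewrite /dT; case: ifP => // kI.
by rewrite divr_ge0 ?mulr_ge0 ?powR_ge0 ?(ltW (Kc_gt0 kI)) ?(le_trans ler01 (hcI_ge1 kI)).
Qed.

Lemma activation_deriv_ratio_le :
  m * S `^ (m - 1) * dS / (S `^ m + K `^ m)
  <= (if k \in Aset then m * hc k * (1 + w k) * (1 + (K `^ m)^-1) else 0).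
Proof.
rewrite /dS; case: ifP => kA; last by rewrite mulr0 mul0r.
have wk_gt0 := w_gt0 kA; have hk_ge0 := le_trans ler01 (hcA_ge1 kA).
set Q := S `^ (m - 1); set V := S `^ m.
have Q_ge0 : 0 <= Q by exact: powR_ge0.
have SQ : S * Q = V by exact: mulr_powRB1.
have Q_le : Q <= V + 1 by exact: powRB1_le.
have wU_le_S : w k * y k `^ hc k <= S.
  rewrite /S (bigD1 k) //= lerDl sumr_ge0 // => i /andP[iA _].
  by rewrite mulr_ge0 ?powR_ge0 ?(ltW (w_gt0 iA)).
have wP_le : w k * y k `^ (hc k - 1) <= S + w k.
  apply: (@le_trans _ _ (w k * (y k `^ hc k + 1))); last by rewrite mulrDr mulr1 lerD2r.
  by rewrite ler_wpM2l ?(ltW wk_gt0) ?powRB1_le ?hcA_ge1.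
have QwP_le : Q * (w k * y k `^ (hc k - 1)) <= (1 + w k) * (V + 1).
  apply: (@le_trans _ _ (Q * (S + w k))); first by rewrite ler_wpM2l.
  have : 0 <= w k * (V + 1 - Q) by rewrite mulr_ge0 ?subr_ge0 ?(ltW wk_gt0).
  by nra.
set c := m * hc k * (1 + w k).
have num_le : m * Q * (w k * (hc k * y k `^ (hc k - 1))) <= c * (V + 1).
  rewrite /c -[leRHS]mulrA.
  apply: (@le_trans _ _ (m * hc k * (Q * (w k * y k `^ (hc k - 1))))).
    by rewrite le_eqVlt; apply/orP; left; apply/eqP; ring.
  by rewrite ler_wpM2l ?mulr_ge0 ?(ltW m_gt0).
apply: le_trans (ler_wpM2r _ num_le) _; first by rewrite invr_ge0 addr_ge0 ?powR_ge0.
rewrite /= -mulrA ler_wpM2l ?addr1_div_le ?powR_ge0 //.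
by rewrite /c !mulr_ge0 ?addr_ge0 ?(ltW m_gt0) ?(ltW wk_gt0).
Qed.

Lemma inhibition_deriv_ratio_le :
  K `^ m * (m * T `^ (m - 1) * dT) / (K `^ m * T `^ m)
  <= (if k \in Iset then m * hc k / Kc k else 0).
Proof.
rewrite /dT; case: ifP => kI; last by rewrite !mulr0 mul0r.
have Kk_gt0 := Kc_gt0 kI; have hk_ge0 := le_trans ler01 (hcI_ge1 kI).
set u := y k / Kc k; set Q := T `^ (m - 1); set P := u `^ (hc k - 1).
have u_ge0 : 0 <= u by rewrite divr_ge0 ?(ltW Kk_gt0).
have P_le_T : P <= T.
  apply: le_trans (powRB1_le u_ge0 (hcI_ge1 kI)) _.
  rewrite /T addrC lerD2l (bigD1 k) //= lerDl.
  by rewrite sumr_ge0 // => j _; exact: powR_ge0.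
rewrite -(mulr_powRB1 (ltW T_gt0) m_gt0) -/Q ler_pdivrMr ?mulr_gt0 ?powR_gt0 //.
have c_ge0 : 0 <= K `^ m * (m * hc k / Kc k).
  by rewrite !mulr_ge0 ?invr_ge0 ?(ltW Km_gt0) ?(ltW m_gt0) ?(ltW Kk_gt0).
apply: (@le_trans _ _ (K `^ m * (m * hc k / Kc k) * (Q * P))).
  by rewrite le_eqVlt; apply/orP; left; apply/eqP; ring.
apply: (@le_trans _ _ (K `^ m * (m * hc k / Kc k) * (Q * T))).
  by rewrite ler_wpM2l // ler_wpM2l ?powR_ge0.
by rewrite le_eqVlt; apply/orP; left; apply/eqP; ring.
Qed.

Lemma hill_partial_deriv_le : exists d,
  partial_deriv_nonneg (hillH Aset Iset w hc Kc m K) y k d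
  /\ `|d| <= hill_deriv_bound k.
Proof.
pose A t := powRext m (Sext t); pose B t := K `^ m * powRext m (Text t).
pose dA := m * S `^ (m - 1) * dS; pose dB := K `^ m * (m * T `^ (m - 1) * dT).
have A0 : A 0 = S `^ m by rewrite /A Sext0 powRext_ge0.
have B0 : B 0 = K `^ m * T `^ m by rewrite /B Text0 powRext_ge0 // ltW.
have A_dA : is_derive (0 : R) 1 A dA.
  by rewrite /dA -Sext0; apply: is_derive_powRext_comp is_derive_Sext; rewrite // Sext0.
have B_dB : is_derive (0 : R) 1 B dB.
  rewrite /dB -Text0; apply: is_deriveZ; apply: is_derive_powRext_comp is_derive_Text.
    by [].
  by rewrite Text0 ltW.
have A0_ge0 : 0 <= A 0 by rewrite A0 powR_ge0.
have B0_gt0 : 0 < B 0 by rewrite B0 mulr_gt0 ?powR_gt0.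
have AB0_neq0 : A 0 + B 0 != 0 by rewrite gt_eqF ?ltr_wpDl.
exists ((dA * (A 0 + B 0) - A 0 * (dA + dB)) / (A 0 + B 0) ^+ 2); split.
  apply: is_derive_partial_deriv_nonneg (y_ge0 k) _ hillH_line.
  have AB_dAB : is_derive (0 : R) 1 (fun t => A t + B t) (dA + dB).
    exact: is_deriveD.
  exact: is_derive_div A_dA AB_dAB AB0_neq0.
apply: le_trans (norm_derive_ratio_le A0_ge0 B0_gt0 _ _) _.
- by rewrite /dA mulr_ge0 ?mulr_ge0 ?powR_ge0 ?(ltW m_gt0).
- by rewrite /dB !mulr_ge0 ?powR_ge0 ?(ltW m_gt0).
rewrite A0 B0; apply: lerD; last exact: inhibition_deriv_ratio_le.
apply: le_trans activation_deriv_ratio_le.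
rewrite ler_wpM2l ?mulr_ge0 ?powR_ge0 ?(ltW m_gt0) //.
have KTm_gt0 : 0 < K `^ m * T `^ m by rewrite -B0.
rewrite lef_pV2 ?posrE ?ltr_wpDl ?powR_ge0 // lerD2l ler_peMr ?(ltW Km_gt0) //.
exact: powR_ge1 T_ge1 (ltW m_gt0).
Qed.

End HillPartialDerivative.

Theorem proposition1 (R : realType) (n : nat) (Aset Iset : {set 'I_n})
  (w hc Kc : 'I_n -> R) (m K : R) :
  (0 < n)%N ->
  (forall i, i \in Aset -> 0 < w i) ->
  0 < K ->
  (forall j, j \in Iset -> 0 < Kc j) ->
  (forall i, i \in Aset :|: Iset -> 1 <= hc i) ->
  1 <= m ->
  exists C : R, 0 < C /\
    forall (k : 'I_n) (y : 'I_n -> R), (forall i, 0 <= y i) ->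
      exists d : R,
        partial_deriv_nonneg (hillH Aset Iset w hc Kc m K) y k d /\ `|d| <= C.
Proof.
move=> _ w_gt0 K_gt0 Kc_gt0 hc_ge1 m_ge1.
have hcA_ge1 i : i \in Aset -> 1 <= hc i by move=> iA; rewrite hc_ge1 // inE iA.
have hcI_ge1 j : j \in Iset -> 1 <= hc j by move=> jI; rewrite hc_ge1 // inE jI orbT.
have bound_ge0 k : 0 <= hill_deriv_bound Aset Iset w hc Kc m K k.
  exact: hill_deriv_bound_ge0.
exists (1 + \sum_k hill_deriv_bound Aset Iset w hc Kc m K k); split.
  by rewrite ltr_pwDl ?ltr01 ?sumr_ge0.
move=> k y y_ge0.
have [d [d_partial d_le]] :=
  hill_partial_deriv_le w_gt0 K_gt0 Kc_gt0 hcA_ge1 hcI_ge1 m_ge1 k y_ge0.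
exists d; split => //; apply: le_trans d_le _.
by rewrite (bigD1 k) //= addrCA lerDl addr_ge0 ?sumr_ge0.
Qed.
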